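(* Let $A$ be a unital C*-algebra. There is a bijective correspondence between quasi-states $\rho$ on $A$ and probability integrals on $\underline{A}_{\mathrm{sa}}$ internal to $\mathcal{T}(A)=[\mathcal{C}(A),\mathbf{Set}]$; externally, the latter are families $(I_C)_{C\in\mathcal{C}(A)}$ of positive linear functionals $I_C\colon C_{\mathrm{sa}}\to\mathbb{R}$ with $I_C(1)=1$ that are natural, i.e. $I_D|_{C_{\mathrm{sa}}}=I_C$ whenever $C\subseteq D$. The correspondence sends $\rho$ to $I_C=\rho|_{C_{\mathrm{sa}}}$ and, conversely, $(I_C)$ to the unique complex-linear-on-real-and-imaginary-parts extension of $a\mapsto I_{C^*(a)}(a)$ ($a\in A_{\mathrm{sa}}$, $C^*(a)$ the C*-subalgebra generated by $a$ and $1$). Under this correspondence faithful quasi-states correspond to faithful probability integrals (those with $I_C(f)=0$, $f\ge0$ implying $f=0$ for all $C$).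
   Context: $\mathcal{C}(A)$: poset of commutative unital C*-subalgebras of $A$ under inclusion; $\underline{A}(C)=C$ is the Bohrification, an internal commutative C*-algebra, and $\underline{A}_{\mathrm{sa}}(C)=C_{\mathrm{sa}}$; the internal Dedekind reals in $\mathcal{T}(A)$ form the constant functor $C\mapsto\mathbb{R}$. A quasi-linear functional on $A$ is a map $\rho\colon A\to\mathbb{C}$ that is linear on every commutative C*-subalgebra and satisfies $\rho(a+ib)=\rho(a)+i\rho(b)$ for all $a,b\in A_{\mathrm{sa}}$; it is a quasi-state if moreover $\rho(A^+)\subseteq\mathbb{R}^+$ and $\rho(1)=1$; it is faithful if $\rho(a)=0$ with $a\ge0$ implies $a=0$. A probability integral on a Riesz space $R$ with strong unit $1$ is a linear $I\colon R\to\mathbb{R}$ with $I(f)\ge0$ for $f\ge0$ and $I(1)=1$. *)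

From Stdlib Require Import Reals.
Open Scope R_scope.

Record Cx := mkC { Re : R ; Im : R }.
Definition C0 : Cx := mkC 0 0.
Definition C1 : Cx := mkC 1 0.
Definition Ci : Cx := mkC 0 1.
Definition RtoC (r : R) : Cx := mkC r 0.
Definition Cadd (z w : Cx) : Cx := mkC (Re z + Re w) (Im z + Im w).
Definition Cmul (z w : Cx) : Cx :=
  mkC (Re z * Re w - Im z * Im w) (Re z * Im w + Im z * Re w).
Definition Cconj (z : Cx) : Cx := mkC (Re z) (- Im z).
Definition Cmod (z : Cx) : R := sqrt (Re z * Re z + Im z * Im z).

Record CStarAlgebra := {
  car :> Type;
  a0 : car;
  a1 : car;
  aadd : car -> car -> car;
  aopp : car -> car;
  asmul : Cx -> car -> car;
  amul : car -> car -> car;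
  astar : car -> car;
  anorm : car -> R;
  aadd_assoc : forall x y z, aadd x (aadd y z) = aadd (aadd x y) z;
  aadd_comm : forall x y, aadd x y = aadd y x;
  aadd_0 : forall x, aadd x a0 = x;
  aadd_opp : forall x, aadd x (aopp x) = a0;
  asmul_assoc : forall s t x, asmul s (asmul t x) = asmul (Cmul s t) x;
  asmul_1 : forall x, asmul C1 x = x;
  asmul_addr : forall s x y, asmul s (aadd x y) = aadd (asmul s x) (asmul s y);
  asmul_addl : forall s t x, asmul (Cadd s t) x = aadd (asmul s x) (asmul t x);
  amul_assoc : forall x y z, amul x (amul y z) = amul (amul x y) z;
  amul_1l : forall x, amul a1 x = x;
  amul_1r : forall x, amul x a1 = x;
  amul_addl : forall x y z, amul (aadd x y) z = aadd (amul x z) (amul y z);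
  amul_addr : forall x y z, amul x (aadd y z) = aadd (amul x y) (amul x z);
  amul_smull : forall s x y, amul (asmul s x) y = asmul s (amul x y);
  amul_smulr : forall s x y, amul x (asmul s y) = asmul s (amul x y);
  astar_invol : forall x, astar (astar x) = x;
  astar_add : forall x y, astar (aadd x y) = aadd (astar x) (astar y);
  astar_smul : forall s x, astar (asmul s x) = asmul (Cconj s) (astar x);
  astar_mul : forall x y, astar (amul x y) = amul (astar y) (astar x);
  anorm_nonneg : forall x, 0 <= anorm x;
  anorm_eq0 : forall x, anorm x = 0 -> x = a0;
  anorm_triangle : forall x y, anorm (aadd x y) <= anorm x + anorm y;
  anorm_smul : forall s x, anorm (asmul s x) = Cmod s * anorm x;
  anorm_mul : forall x y, anorm (amul x y) <= anorm x * anorm y;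
  anorm_cstar : forall x, anorm (amul (astar x) x) = anorm x * anorm x;
  acomplete : forall u : nat -> car,
    (forall eps, 0 < eps -> exists N, forall m n, (N <= m)%nat -> (N <= n)%nat ->
        anorm (aadd (u m) (aopp (u n))) < eps) ->
    exists l, forall eps, 0 < eps -> exists N, forall n, (N <= n)%nat ->
        anorm (aadd (u n) (aopp l)) < eps
}.

Arguments a0 {c}. Arguments a1 {c}. Arguments aadd {c}. Arguments aopp {c}.
Arguments asmul {c}. Arguments amul {c}. Arguments astar {c}. Arguments anorm {c}.

Section Defs.
Variable A : CStarAlgebra.

Definition self_adjoint (x : A) : Prop := astar x = x.

Definition positive (a : A) : Prop := exists b : A, a = amul (astar b) b.

Definition is_CStar_subalgebra (S : A -> Prop) : Prop :=
  S a1 /\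
  (forall x y, S x -> S y -> S (aadd x y)) /\
  (forall s x, S x -> S (asmul s x)) /\
  (forall x y, S x -> S y -> S (amul x y)) /\
  (forall x, S x -> S (astar x)) /\
  (forall (u : nat -> A) (l : A), (forall n, S (u n)) ->
     (forall eps, 0 < eps -> exists N, forall n, (N <= n)%nat ->
        anorm (aadd (u n) (aopp l)) < eps) -> S l).

Definition in_CA (C : A -> Prop) : Prop :=
  is_CStar_subalgebra C /\ (forall x y, C x -> C y -> amul x y = amul y x).

Definition Cstar_gen (a : A) : A -> Prop :=
  fun x => forall S, is_CStar_subalgebra S -> S a -> S x.

Definition positive_in (C : A -> Prop) (f : A) : Prop :=
  exists g : A, C g /\ f = amul (astar g) g.

Definition quasi_linear (rho : A -> Cx) : Prop :=
  (forall C, in_CA C ->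
     (forall x y, C x -> C y -> rho (aadd x y) = Cadd (rho x) (rho y)) /\
     (forall s x, C x -> rho (asmul s x) = Cmul s (rho x))) /\
  (forall a b, self_adjoint a -> self_adjoint b ->
     rho (aadd a (asmul Ci b)) = Cadd (rho a) (Cmul Ci (rho b))).

Definition quasi_state (rho : A -> Cx) : Prop :=
  quasi_linear rho /\
  (forall a, positive a -> Im (rho a) = 0 /\ 0 <= Re (rho a)) /\
  rho a1 = C1.

Definition faithful_qs (rho : A -> Cx) : Prop :=
  forall a, positive a -> rho a = C0 -> a = a0.

(* External description of an internal probability integral on A_sa in T(A):
   a family C |-> I_C : C_sa -> R (only the values on C in C(A) and
   f in C_sa matter). *)
Definition prob_integral_family (I : (A -> Prop) -> A -> R) : Prop :=
  (forall C, in_CA C ->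
     (forall f g, C f -> self_adjoint f -> C g -> self_adjoint g ->
        I C (aadd f g) = I C f + I C g) /\
     (forall (r : R) f, C f -> self_adjoint f -> I C (asmul (RtoC r) f) = r * I C f) /\
     (forall f, C f -> self_adjoint f -> positive_in C f -> 0 <= I C f) /\
     I C a1 = 1) /\
  (forall C D, in_CA C -> in_CA D -> (forall x, C x -> D x) ->
     forall f, C f -> self_adjoint f -> I D f = I C f).

Definition faithful_pif (I : (A -> Prop) -> A -> R) : Prop :=
  forall C, in_CA C -> forall f, C f -> self_adjoint f -> positive_in C f ->
    I C f = 0 -> f = a0.

Definition re_part (a : A) : A := asmul (RtoC (/2)) (aadd a (astar a)).
Definition im_part (a : A) : A :=
  asmul (mkC 0 (- / 2)) (aadd a (aopp (astar a))).

Definition restrict_qs (rho : A -> Cx) : (A -> Prop) -> A -> R :=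
  fun C f => Re (rho f).

Definition extend_pif (I : (A -> Prop) -> A -> R) : A -> Cx :=
  fun a => mkC (I (Cstar_gen (re_part a)) (re_part a))
               (I (Cstar_gen (im_part a)) (im_part a)).

End Defs.

From Pilot Require Import Defs.
From Stdlib Require Import Reals Lra Lia List FunctionalExtensionality.
Open Scope R_scope.

(* Linearity, naturality and the two inversion formulas are bookkeeping with the
   decomposition a = Re a + i Im a, using that C*(h) is commutative and contained in every
   C*-subalgebra containing h.  The one analytic ingredient is that b^* b equals g^* g for
   some g in C*(b^* b), which makes positivity and faithfulness in A (quasi-states) agree
   with positivity in each commutative C (probability integrals); it follows from the
   Fukamiya–Kaplansky theorem and the existence of square roots inside C*-subalgebras. *)

Local Notation "x ⊕ y" := (aadd x y) (at level 50, left associativity).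
Local Notation "x ⊗ y" := (amul x y) (at level 40, left associativity).
Local Notation "r ⋅ x" := (asmul (RtoC r) x) (at level 40, no associativity).
Local Notation "⊖ x" := (aopp x) (at level 35).
Local Notation "x ⊖ y" := (aadd x (aopp y)) (at level 50, left associativity).

Lemma Cx_ext (z w : Cx) : Re z = Re w -> Im z = Im w -> z = w.
Proof. destruct z, w; simpl; intros -> ->; reflexivity. Qed.

Lemma RtoC_add r s : Cadd (RtoC r) (RtoC s) = RtoC (r + s).
Proof. apply Cx_ext; simpl; ring. Qed.
Lemma RtoC_mul r s : Cmul (RtoC r) (RtoC s) = RtoC (r * s).
Proof. apply Cx_ext; simpl; ring. Qed.
Lemma RtoC_conj r : Cconj (RtoC r) = RtoC r.
Proof. apply Cx_ext; simpl; ring. Qed.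

Section Algebra.
Context {A : CStarAlgebra}.
Implicit Types x y z : A.

Lemma add0l x : a0 ⊕ x = x.
Proof. rewrite aadd_comm; apply aadd_0. Qed.
Lemma addNl x : ⊖ x ⊕ x = a0.
Proof. rewrite aadd_comm; apply aadd_opp. Qed.
Lemma addAC x y z : x ⊕ y ⊕ z = x ⊕ z ⊕ y.
Proof. rewrite <- !aadd_assoc, (aadd_comm _ y z); reflexivity. Qed.

Lemma add_cancel_r x y z : x ⊕ z = y ⊕ z -> x = y.
Proof.
  intro H. rewrite <- (aadd_0 _ x), <- (aadd_0 _ y), <- (aadd_opp _ z), !aadd_assoc, H.
  reflexivity.
Qed.
Lemma add_cancel_l x y z : z ⊕ x = z ⊕ y -> x = y.
Proof. rewrite (aadd_comm _ z x), (aadd_comm _ z y). apply add_cancel_r. Qed.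

Lemma opp_unique x y : y ⊕ x = a0 -> y = ⊖ x.
Proof. intro H. apply (add_cancel_r _ _ x). rewrite H, addNl. reflexivity. Qed.
Lemma sub_eq0 x y : x ⊖ y = a0 -> x = y.
Proof. intro H. apply (add_cancel_r _ _ (⊖ y)). rewrite H, aadd_opp. reflexivity. Qed.
Lemma oppK x : ⊖ (⊖ x) = x.
Proof. symmetry. apply opp_unique. apply aadd_opp. Qed.
Lemma opp0 : ⊖ a0 = @a0 A.
Proof. symmetry; apply opp_unique. apply aadd_0. Qed.
Lemma oppD x y : ⊖ (x ⊕ y) = ⊖ x ⊕ ⊖ y.
Proof.
  symmetry; apply opp_unique.
  rewrite aadd_assoc, (addAC (⊖ x) (⊖ y) x), addNl, add0l, addNl. reflexivity.
Qed.

Lemma smul0 x : 0 ⋅ x = a0.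
Proof.
  apply (add_cancel_l _ _ (0 ⋅ x)). rewrite aadd_0, <- asmul_addl, RtoC_add, Rplus_0_l.
  reflexivity.
Qed.
Lemma smulx0 (s : Cx) : asmul s (@a0 A) = a0.
Proof.
  apply (add_cancel_l _ _ (asmul s a0)). rewrite aadd_0, <- asmul_addr, aadd_0.
  reflexivity.
Qed.
Lemma smul1 x : 1 ⋅ x = x.
Proof. apply asmul_1. Qed.
Lemma smulN1 x : (-1) ⋅ x = ⊖ x.
Proof.
  apply opp_unique. rewrite <- (smul1 x) at 2. rewrite <- asmul_addl, RtoC_add.
  replace (-1 + 1) with 0 by ring. apply smul0.
Qed.
Lemma smulA (r s : R) x : r ⋅ (s ⋅ x) = (r * s) ⋅ x.
Proof. rewrite asmul_assoc, RtoC_mul. reflexivity. Qed.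
Lemma smulDl (r s : R) x : (r + s) ⋅ x = r ⋅ x ⊕ s ⋅ x.
Proof. rewrite <- asmul_addl, RtoC_add. reflexivity. Qed.
Lemma smul_opp (s : Cx) x : asmul s (⊖ x) = ⊖ asmul s x.
Proof. apply opp_unique. rewrite <- asmul_addr, addNl. apply smulx0. Qed.

Lemma mul0l x : a0 ⊗ x = a0.
Proof.
  apply (add_cancel_l _ _ (a0 ⊗ x)). rewrite aadd_0, <- amul_addl, aadd_0. reflexivity.
Qed.
Lemma mul0r x : x ⊗ a0 = a0.
Proof.
  apply (add_cancel_l _ _ (x ⊗ a0)). rewrite aadd_0, <- amul_addr, aadd_0. reflexivity.
Qed.
Lemma mulNl x y : (⊖ x) ⊗ y = ⊖ (x ⊗ y).
Proof. apply opp_unique. rewrite <- amul_addl, addNl. apply mul0l. Qed.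
Lemma mulNr x y : x ⊗ (⊖ y) = ⊖ (x ⊗ y).
Proof. apply opp_unique. rewrite <- amul_addr, addNl. apply mul0r. Qed.
Lemma mulBl x y z : (x ⊖ y) ⊗ z = x ⊗ z ⊖ y ⊗ z.
Proof. rewrite amul_addl, mulNl. reflexivity. Qed.
Lemma mulBr x y z : x ⊗ (y ⊖ z) = x ⊗ y ⊖ x ⊗ z.
Proof. rewrite amul_addr, mulNr. reflexivity. Qed.

Lemma star0 : astar (@a0 A) = a0.
Proof. rewrite <- (smul0 a0) at 1. rewrite astar_smul, RtoC_conj. apply smul0. Qed.
Lemma star1 : astar (@a1 A) = a1.
Proof.
  rewrite <- (amul_1r _ (astar a1)). rewrite <- (astar_invol _ a1) at 2.
  rewrite <- astar_mul, amul_1r, astar_invol. reflexivity.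
Qed.
Lemma starN x : astar (⊖ x) = ⊖ astar x.
Proof. rewrite <- !smulN1, astar_smul, RtoC_conj. reflexivity. Qed.
Lemma stars (r : R) x : astar (r ⋅ x) = r ⋅ astar x.
Proof. rewrite astar_smul, RtoC_conj. reflexivity. Qed.

End Algebra.

Inductive lexp :=
  LAtom (n : nat) | LAdd (a b : lexp) | LOpp (a : lexp) | LSc (r : R) (a : lexp) | LZero.

Section Normaliser.
Context {A : CStarAlgebra}.

Fixpoint leval (env : list A) (e : lexp) : A :=
  match e with
  | LAtom n => nth n env a0
  | LAdd a b => leval env a ⊕ leval env b
  | LOpp a => ⊖ leval env a
  | LSc r a => r ⋅ leval env a
  | LZero => a0
  end.

Fixpoint coef (e : lexp) (i : nat) : R :=
  match e with
  | LAtom j => if Nat.eqb i j then 1 else 0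
  | LAdd a b => coef a i + coef b i
  | LOpp a => - coef a i
  | LSc r a => r * coef a i
  | LZero => 0
  end.

Fixpoint lsum (env : list A) (f : nat -> R) : A :=
  match env with
  | nil => a0
  | x :: env' => f 0%nat ⋅ x ⊕ lsum env' (fun i => f (S i))
  end.

Lemma lsum_add env f g : lsum env (fun i => f i + g i) = lsum env f ⊕ lsum env g.
Proof.
  revert f g; induction env as [|x env IH]; intros f g; simpl.
  - rewrite aadd_0. reflexivity.
  - rewrite smulDl, IH, <- !aadd_assoc. f_equal.
    rewrite !aadd_assoc. f_equal. apply aadd_comm.
Qed.

Lemma lsum_sc env r f : lsum env (fun i => r * f i) = r ⋅ lsum env f.
Proof.
  revert f; induction env as [|x env IH]; intros f; simpl.
  - symmetry; apply smulx0.
  - rewrite IH, asmul_addr, smulA. reflexivity.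
Qed.

Lemma lsum_zero env : lsum env (fun _ => 0) = a0.
Proof. induction env; simpl; auto. rewrite IHenv, smul0, aadd_0. reflexivity. Qed.

Lemma lsum_opp env f : lsum env (fun i => - f i) = ⊖ lsum env f.
Proof.
  rewrite <- smulN1, <- lsum_sc. f_equal.
  apply functional_extensionality. intro; ring.
Qed.

Lemma lsum_atom env j : lsum env (fun i => if Nat.eqb i j then 1 else 0) = nth j env a0.
Proof.
  revert j; induction env as [|x env IH]; intros j; simpl.
  - destruct j; reflexivity.
  - destruct j as [|j]; simpl.
    + rewrite (lsum_zero env), aadd_0. apply smul1.
    + rewrite smul0, add0l, <- IH. reflexivity.
Qed.

Lemma leval_lsum env e : leval env e = lsum env (coef e).
Proof.
  induction e; simpl.
  - symmetry; apply lsum_atom.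
  - rewrite IHe1, IHe2, <- lsum_add. reflexivity.
  - rewrite IHe, <- lsum_opp. reflexivity.
  - rewrite IHe, <- lsum_sc. reflexivity.
  - symmetry; apply lsum_zero.
Qed.

Lemma lsum_ext env f g :
  (forall i, (i < length env)%nat -> f i = g i) -> lsum env f = lsum env g.
Proof.
  revert f g; induction env as [|x env IH]; intros f g H; simpl; auto.
  rewrite (H 0%nat) by (simpl; lia). f_equal. apply IH. intros i Hi. apply H. simpl; lia.
Qed.

Lemma lexp_eq env e1 e2 :
  (forall i, (i < length env)%nat -> coef e1 i = coef e2 i) ->
  leval env e1 = leval env e2.
Proof. intro H. rewrite !leval_lsum. apply lsum_ext. exact H. Qed.

End Normaliser.

Ltac find_idx x l :=
  match l with
  | nil => constr:(@None nat)
  | cons ?y ?l' => match y with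
                   | x => constr:(Some 0%nat)
                   | _ => let r := find_idx x l' in
                          match r with
                          | Some ?n => constr:(Some (S n))
                          | None => constr:(@None nat)
                          end
                   end
  end.

Ltac add_atoms t l :=
  match t with
  | @aadd _ ?x ?y => let l1 := add_atoms x l in add_atoms y l1
  | @aopp _ ?x => add_atoms x l
  | @asmul _ (RtoC _) ?x => add_atoms x l
  | @a0 _ => l
  | _ => let r := find_idx t l in
         match r with
         | Some _ => l
         | None => constr:(cons t l)
         end
  end.

Ltac reify t l :=
  match t with
  | @aadd _ ?x ?y => let a := reify x l in let b := reify y l in constr:(LAdd a b)
  | @aopp _ ?x => let a := reify x l in constr:(LOpp a)
  | @asmul _ (RtoC ?r) ?x => let a := reify x l in constr:(LSc r a)
  | @a0 _ => constr:(LZero)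
  | _ => let r := find_idx t l in
         match r with
         | Some ?n => constr:(LAtom n)
         end
  end.

(* proves an equation between real-linear combinations of arbitrary atoms *)
Ltac agroup :=
  match goal with
  | |- @eq (car ?A) ?L ?R =>
      let l0 := add_atoms L (@nil (car A)) in
      let l := add_atoms R l0 in
      let eL := reify L l in
      let eR := reify R l in
      change (leval l eL = leval l eR);
      apply lexp_eq; intros i Hi; simpl in Hi;
      repeat (first [ exfalso; lia
                    | destruct i as [|i];
                      [simpl; first [solve [ring] | solve [field; lra] | solve [field; auto] | lra] |] ])
  end.

Ltac aexpand :=
  repeat progress (rewrite ?amul_addl, ?amul_addr, ?amul_smull, ?amul_smulr, ?mulNl, ?mulNr,
                           ?mul0l, ?mul0r, ?amul_1l, ?amul_1r, ?amul_assoc).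

Section Limits.
Context {A : CStarAlgebra}.
Implicit Types x y z c l : A.
Implicit Types u v : nat -> A.

Lemma Cmod_RtoC r : Cmod (RtoC r) = Rabs r.
Proof.
  unfold Cmod; simpl. replace (r * r + 0 * 0) with (Rsqr r) by (unfold Rsqr; ring).
  apply sqrt_Rsqr_abs.
Qed.
Lemma norm_smul r x : anorm (r ⋅ x) = Rabs r * anorm x.
Proof. rewrite anorm_smul, Cmod_RtoC. reflexivity. Qed.
Lemma norm0 : anorm (@a0 A) = 0.
Proof. rewrite <- (smul0 a0), norm_smul, Rabs_R0. ring. Qed.
Lemma normN x : anorm (⊖ x) = anorm x.
Proof. rewrite <- smulN1, norm_smul. rewrite (Rabs_left (-1)) by lra. ring. Qed.
Lemma norm_sub_sym x y : anorm (x ⊖ y) = anorm (y ⊖ x).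
Proof. rewrite <- normN, oppD, oppK, aadd_comm. reflexivity. Qed.
Lemma norm_sub3 x y z : anorm (x ⊖ z) <= anorm (x ⊖ y) + anorm (y ⊖ z).
Proof.
  replace (x ⊖ z) with ((x ⊖ y) ⊕ (y ⊖ z)) by agroup. apply anorm_triangle.
Qed.

Lemma norm_star x : anorm (astar x) = anorm x.
Proof.
  assert (le : forall y : A, anorm y <= anorm (astar y)).
  { intro y. destruct (Req_dec (anorm y) 0) as [H|H].
    - rewrite H; apply anorm_nonneg.
    - pose proof (anorm_nonneg _ y). pose proof (anorm_cstar _ y) as Hc.
      pose proof (anorm_mul _ (astar y) y) as Hm. rewrite Hc in Hm.
      apply Rmult_le_reg_r with (anorm y); lra. }
  apply Rle_antisym; [|apply le]. rewrite <- (astar_invol _ x) at 2. apply le.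
Qed.
Lemma norm_sa_sq x : astar x = x -> anorm (x ⊗ x) = anorm x * anorm x.
Proof. intro H. rewrite <- H at 1. apply anorm_cstar. Qed.

Lemma norm1_le : anorm (@a1 A) <= 1.
Proof.
  pose proof (anorm_cstar _ (@a1 A)) as H. rewrite star1, amul_1l in H.
  pose proof (anorm_nonneg _ (@a1 A)). nra.
Qed.
Lemma norm_scal r : anorm (r ⋅ @a1 A) <= Rabs r.
Proof. rewrite norm_smul. pose proof norm1_le. pose proof (Rabs_pos r). nra. Qed.

Definition conv u l : Prop :=
  forall eps, 0 < eps -> exists N, forall n, (N <= n)%nat -> anorm (u n ⊖ l) < eps.

Lemma conv_unique u l l' : conv u l -> conv u l' -> l = l'.
Proof.
  intros H1 H2. apply sub_eq0, anorm_eq0.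
  apply Rle_antisym; [|apply anorm_nonneg].
  apply Rnot_lt_le; intro Hp.
  destruct (H1 (anorm (l ⊖ l') / 2)) as [N1 HN1]; [lra|].
  destruct (H2 (anorm (l ⊖ l') / 2)) as [N2 HN2]; [lra|].
  specialize (HN1 (N1 + N2)%nat ltac:(lia)). specialize (HN2 (N1 + N2)%nat ltac:(lia)).
  pose proof (norm_sub3 l (u (N1 + N2)%nat) l') as H.
  rewrite (norm_sub_sym l (u (N1 + N2)%nat)) in H. lra.
Qed.

Lemma conv_const c : conv (fun _ => c) c.
Proof. intros e He. exists 0%nat. intros. rewrite aadd_opp, norm0. exact He. Qed.

Lemma conv_shift u l : conv u l -> conv (fun n => u (S n)) l.
Proof. intros H e He. destruct (H e He) as [N HN]. exists N. intros n Hn. apply HN. lia. Qed.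

Lemma conv_scaled u l v k (K : R) : 0 <= K ->
  (forall n, anorm (u n ⊖ l) <= K * anorm (v n ⊖ k)) -> conv v k -> conv u l.
Proof.
  intros HK Hle H e He.
  destruct (H (e / (K + 1))) as [N HN]; [apply Rdiv_lt_0_compat; lra|].
  exists N. intros n Hn. specialize (HN n Hn). specialize (Hle n).
  pose proof (anorm_nonneg _ (v n ⊖ k)).
  apply Rmult_lt_compat_l with (r := K + 1) in HN; [|lra].
  replace ((K + 1) * (e / (K + 1))) with e in HN by (field; lra). nra.
Qed.

Lemma conv_add u v l k : conv u l -> conv v k -> conv (fun n => u n ⊕ v n) (l ⊕ k).
Proof.
  intros H1 H2 e He.
  destruct (H1 (e/2)) as [N1 HN1]; [lra|]. destruct (H2 (e/2)) as [N2 HN2]; [lra|].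
  exists (N1 + N2)%nat. intros n Hn.
  replace (u n ⊕ v n ⊖ (l ⊕ k)) with ((u n ⊖ l) ⊕ (v n ⊖ k)) by (rewrite oppD; agroup).
  eapply Rle_lt_trans. apply anorm_triangle.
  specialize (HN1 n ltac:(lia)). specialize (HN2 n ltac:(lia)). lra.
Qed.

Lemma conv_smul u l r : conv u l -> conv (fun n => r ⋅ u n) (r ⋅ l).
Proof.
  apply (conv_scaled _ _ _ _ (Rabs r) (Rabs_pos r)). intro n.
  replace (r ⋅ u n ⊖ r ⋅ l) with (r ⋅ (u n ⊖ l)) by agroup.
  rewrite norm_smul. lra.
Qed.

Lemma conv_star u l : conv u l -> conv (fun n => astar (u n)) (astar l).
Proof.
  apply (conv_scaled _ _ _ _ 1 ltac:(lra)). intro n.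
  rewrite <- starN, <- astar_add, norm_star. lra.
Qed.

Lemma conv_mull c u l : conv u l -> conv (fun n => c ⊗ u n) (c ⊗ l).
Proof.
  apply (conv_scaled _ _ _ _ (anorm c) (anorm_nonneg _ c)). intro n.
  rewrite <- mulBr. apply anorm_mul.
Qed.

Lemma conv_mulr c u l : conv u l -> conv (fun n => u n ⊗ c) (l ⊗ c).
Proof.
  apply (conv_scaled _ _ _ _ (anorm c) (anorm_nonneg _ c)). intro n.
  rewrite <- mulBl, Rmult_comm. apply anorm_mul.
Qed.

Lemma conv_mul u v l k B : (forall n, anorm (v n) <= B) -> conv u l -> conv v k ->
  conv (fun n => u n ⊗ v n) (l ⊗ k).
Proof.
  intros HB H1 H2.
  assert (HB0 : 0 <= B) by (eapply Rle_trans; [apply anorm_nonneg|apply (HB 0%nat)]).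
  assert (E : forall n, u n ⊗ v n ⊖ l ⊗ k = (u n ⊖ l) ⊗ v n ⊕ l ⊗ (v n ⊖ k)).
  { intro n. rewrite mulBl, mulBr. agroup. }
  assert (Hu : conv (fun n => (u n ⊖ l) ⊗ v n) a0).
  { apply (conv_scaled _ _ u l B HB0); auto. intro n.
    rewrite opp0, aadd_0, Rmult_comm.
    eapply Rle_trans. apply anorm_mul.
    apply Rmult_le_compat_l; auto. apply anorm_nonneg. }
  assert (Hv : conv (fun n => l ⊗ (v n ⊖ k)) a0).
  { apply (conv_scaled _ _ v k (anorm l) (anorm_nonneg _ l)); auto.
    intro n. rewrite opp0, aadd_0. apply anorm_mul. }
  intros e He. destruct (conv_add _ _ _ _ Hu Hv e He) as [N HN]. exists N. intros n Hn.
  rewrite E. specialize (HN n Hn). rewrite aadd_0, opp0, aadd_0 in HN. exact HN.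
Qed.

Lemma conv_norm_le u l B : (forall n, anorm (u n) <= B) -> conv u l -> anorm l <= B.
Proof.
  intros HB H. apply Rnot_lt_le. intro Hlt.
  destruct (H (anorm l - B)) as [N HN]; [lra|].
  specialize (HN N (le_n _)). pose proof (norm_sub3 l (u N) a0) as H0.
  rewrite opp0, !aadd_0 in H0. rewrite norm_sub_sym in HN. specialize (HB N). lra.
Qed.

Lemma conv_comm u l y : (forall n, u n ⊗ y = y ⊗ u n) -> conv u l -> l ⊗ y = y ⊗ l.
Proof.
  intros H Hl. apply (conv_unique (fun n => u n ⊗ y)).
  - apply conv_mulr; auto.
  - replace (fun n => u n ⊗ y) with (fun n => y ⊗ u n).
    + apply conv_mull; auto.
    + apply functional_extensionality; intro n; auto.
Qed.

Lemma cauchy_dom u (q : nat -> R) (M : R) :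
  (forall n, anorm (u (S n) ⊖ u n) <= q (S n) - q n) -> (forall n, q n <= M) ->
  exists l, conv u l.
Proof.
  intros Hd HM.
  assert (Hg : Un_growing q).
  { intro n. pose proof (Hd n). pose proof (anorm_nonneg _ (u (S n) ⊖ u n)). lra. }
  assert (Hb : bound (EUn q)) by (exists M; intros x [n ->]; apply HM).
  destruct (growing_cv q Hg Hb) as [lq Hlq].
  assert (Hc := CV_Cauchy q (exist _ lq Hlq)).
  assert (Hmn : forall n k, anorm (u (k + n)%nat ⊖ u n) <= q (k + n)%nat - q n).
  { intros n k. induction k; simpl.
    - rewrite aadd_opp, norm0. lra.
    - eapply Rle_trans. apply (norm_sub3 _ (u (k + n)%nat)).
      pose proof (Hd (k + n)%nat). lra. }
  assert (Hgap : forall m n, (n <= m)%nat -> anorm (u m ⊖ u n) <= Rabs (q m - q n)).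
  { intros m n Hnm. replace m with ((m - n) + n)%nat by lia.
    eapply Rle_trans; [apply Hmn|apply Rle_abs]. }
  apply (acomplete _ u).
  intros e He. destruct (Hc e He) as [N HN]. exists N. intros m n Hm Hn.
  destruct (Nat.le_ge_cases n m) as [Hle|Hle].
  - eapply Rle_lt_trans; [apply Hgap; auto|apply (HN m n Hm Hn)].
  - rewrite norm_sub_sym. eapply Rle_lt_trans; [apply Hgap; auto|apply (HN n m Hn Hm)].
Qed.

End Limits.

Section Subalgebras.
Context {A : CStarAlgebra}.
Implicit Types (S : A -> Prop) (x y a h : A).

Lemma sub_one S : is_CStar_subalgebra A S -> S a1.
Proof. intros [H _]. exact H. Qed.
Lemma sub_add S x y : is_CStar_subalgebra A S -> S x -> S y -> S (x ⊕ y).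
Proof. intros (_ & H & _). apply H. Qed.
Lemma sub_smul S s x : is_CStar_subalgebra A S -> S x -> S (asmul s x).
Proof. intros (_ & _ & H & _). apply H. Qed.
Lemma sub_mul S x y : is_CStar_subalgebra A S -> S x -> S y -> S (x ⊗ y).
Proof. intros (_ & _ & _ & H & _). apply H. Qed.
Lemma sub_star S x : is_CStar_subalgebra A S -> S x -> S (astar x).
Proof. intros (_ & _ & _ & _ & H & _). apply H. Qed.
Lemma sub_lim S u l : is_CStar_subalgebra A S -> (forall n, S (u n)) -> conv u l -> S l.
Proof. intros (_ & _ & _ & _ & _ & H) Hu Hl. exact (H u l Hu Hl). Qed.
Lemma sub_opp S x : is_CStar_subalgebra A S -> S x -> S (⊖ x).
Proof. intros H Hx. rewrite <- smulN1. exact (sub_smul S _ x H Hx). Qed.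
Lemma sub_zero S : is_CStar_subalgebra A S -> S a0.
Proof. intros H. rewrite <- (smul0 a1). exact (sub_smul S _ _ H (sub_one S H)). Qed.

Lemma gen_sub a : is_CStar_subalgebra A (Cstar_gen A a).
Proof.
  unfold Cstar_gen. split; [|split; [|split; [|split; [|split]]]].
  - intros S HS _. exact (sub_one S HS).
  - intros x y Hx Hy S HS Ha. exact (sub_add S x y HS (Hx S HS Ha) (Hy S HS Ha)).
  - intros s x Hx S HS Ha. exact (sub_smul S s x HS (Hx S HS Ha)).
  - intros x y Hx Hy S HS Ha. exact (sub_mul S x y HS (Hx S HS Ha) (Hy S HS Ha)).
  - intros x Hx S HS Ha. exact (sub_star S x HS (Hx S HS Ha)).
  - intros u l Hu Hl S HS Ha. apply (sub_lim S u l); auto. intro n. apply Hu; auto.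
Qed.
Lemma gen_in a : Cstar_gen A a a.
Proof. intros S _ H. exact H. Qed.
Lemma gen_min a S x : is_CStar_subalgebra A S -> S a -> Cstar_gen A a x -> S x.
Proof. intros HS Ha Hx. apply Hx; auto. Qed.

Definition star_commutant (T : A -> Prop) : A -> Prop :=
  fun x => forall y, T y -> x ⊗ y = y ⊗ x /\ astar x ⊗ y = y ⊗ astar x.

Lemma star_commutant_sub T : is_CStar_subalgebra A (star_commutant T).
Proof.
  unfold star_commutant. split; [|split; [|split; [|split; [|split]]]].
  - intros z _. rewrite star1, amul_1l, amul_1r; auto.
  - intros x y Hx Hy z Hz. destruct (Hx z Hz), (Hy z Hz).
    rewrite astar_add, !amul_addl, !amul_addr. split; congruence.
  - intros s x Hx z Hz. destruct (Hx z Hz).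
    rewrite astar_smul, !amul_smull, !amul_smulr. split; congruence.
  - intros x y Hx Hy z Hz. destruct (Hx z Hz) as [E1 E2], (Hy z Hz) as [E3 E4].
    rewrite astar_mul. split.
    + rewrite <- amul_assoc, E3, !amul_assoc, E1. reflexivity.
    + rewrite <- amul_assoc, E2, !amul_assoc, E4. reflexivity.
  - intros x Hx z Hz. destruct (Hx z Hz). rewrite astar_invol. auto.
  - intros u l Hu Hl z Hz. split.
    + apply (conv_comm u l z); auto. intro n. apply (Hu n z Hz).
    + apply (conv_comm (fun n => astar (u n)) (astar l) z).
      * intro n. apply (Hu n z Hz).
      * apply conv_star; auto.
Qed.

(* C*(h) is commutative for self-adjoint h: first C*(h) lies in the *-commutant of {h},
   hence h lies in the *-commutant of C*(h), hence so does all of C*(h). *)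
Lemma gen_comm h : astar h = h -> in_CA A (Cstar_gen A h).
Proof.
  intro Hh. split; [apply gen_sub|].
  assert (S1 : forall x, Cstar_gen A h x -> star_commutant (fun y => y = h) x).
  { intros x Hx. apply (gen_min h); auto. apply star_commutant_sub.
    intros y ->. rewrite Hh. auto. }
  assert (S2 : forall x, Cstar_gen A h x -> star_commutant (Cstar_gen A h) x).
  { intros x Hx. apply (gen_min h); auto. apply star_commutant_sub.
    intros y Hy. destruct (S1 y Hy h eq_refl) as [E1 _]. rewrite Hh. auto. }
  intros x y Hx Hy. apply (S2 x Hx y Hy).
Qed.

End Subalgebras.

(* For ‖x‖ ≤ 1 the iteration y₀ = 0, y_{n+1} = (x + y_n²)/2 converges
   to some y with 2y = x + y², so g = 1 − y satisfies g² = 1 − x.  The real iteration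
   p_{n+1} = (‖x‖ + p_n²)/2 dominates it, which gives convergence. *)
Section SquareRoots.
Context {A : CStarAlgebra}.
Implicit Types x y z : A.

Fixpoint sq_seq x (n : nat) : A :=
  match n with
  | O => a0
  | S k => (1/2) ⋅ (x ⊕ sq_seq x k ⊗ sq_seq x k)
  end.

Fixpoint sq_majorant (r : R) (n : nat) : R :=
  match n with
  | O => 0
  | S k => (r + sq_majorant r k * sq_majorant r k) / 2
  end.

Lemma sq_majorant_bounds r n : 0 <= r <= 1 -> 0 <= sq_majorant r n <= 1.
Proof. intro Hr. induction n; simpl; nra. Qed.

Lemma sq_majorant_incr r n : 0 <= r <= 1 -> sq_majorant r n <= sq_majorant r (S n).
Proof.
  intro Hr. induction n; simpl. lra.
  simpl in IHn. pose proof (sq_majorant_bounds r n Hr). nra.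
Qed.

Lemma sq_seq_norm x n : anorm x <= 1 -> anorm (sq_seq x n) <= sq_majorant (anorm x) n.
Proof.
  intro Hx. pose proof (anorm_nonneg _ x) as H0.
  induction n; simpl. rewrite norm0; lra.
  rewrite norm_smul, Rabs_right by lra.
  pose proof (anorm_triangle _ x (sq_seq x n ⊗ sq_seq x n)).
  pose proof (anorm_mul _ (sq_seq x n) (sq_seq x n)).
  pose proof (anorm_nonneg _ (sq_seq x n)). nra.
Qed.

Lemma sq_seq_bounded x n : anorm x <= 1 -> anorm (sq_seq x n) <= 1.
Proof.
  intro Hx. eapply Rle_trans. apply sq_seq_norm; auto.
  apply sq_majorant_bounds. split; auto. apply anorm_nonneg.
Qed.

Lemma sq_seq_step x n :
  sq_seq x (S (S n)) ⊖ sq_seq x (S n) =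
  (1/2) ⋅ ((sq_seq x (S n) ⊖ sq_seq x n) ⊗ sq_seq x (S n) ⊕
           sq_seq x n ⊗ (sq_seq x (S n) ⊖ sq_seq x n)).
Proof.
  change (sq_seq x (S (S n))) with ((1/2) ⋅ (x ⊕ sq_seq x (S n) ⊗ sq_seq x (S n))).
  set (y1 := sq_seq x (S n)). set (y0 := sq_seq x n).
  assert (E : y1 = (1/2) ⋅ (x ⊕ y0 ⊗ y0)) by reflexivity.
  rewrite E at 3. rewrite mulBl, mulBr. agroup.
Qed.

Lemma sq_seq_diff x n : anorm x <= 1 ->
  anorm (sq_seq x (S n) ⊖ sq_seq x n) <= sq_majorant (anorm x) (S n) - sq_majorant (anorm x) n.
Proof.
  intro Hx. pose proof (anorm_nonneg _ x) as H0.
  induction n.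
  - simpl. rewrite mul0l, opp0, !aadd_0, norm_smul, Rabs_right by lra. lra.
  - rewrite sq_seq_step, norm_smul, Rabs_right by lra.
    change (sq_majorant (anorm x) (S (S n)))
      with ((anorm x + sq_majorant (anorm x) (S n) * sq_majorant (anorm x) (S n)) / 2).
    pose proof (sq_seq_norm x (S n) Hx). pose proof (sq_seq_norm x n Hx).
    pose proof (sq_majorant_bounds (anorm x) n ltac:(lra)).
    pose proof (sq_majorant_incr (anorm x) n ltac:(lra)).
    set (y1 := sq_seq x (S n)) in *. set (y0 := sq_seq x n) in *.
    set (p1 := sq_majorant (anorm x) (S n)) in *. set (p0 := sq_majorant (anorm x) n) in *.
    assert (p1 = (anorm x + p0 * p0) / 2) by reflexivity.
    pose proof (anorm_triangle _ ((y1 ⊖ y0) ⊗ y1) (y0 ⊗ (y1 ⊖ y0))).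
    pose proof (anorm_mul _ (y1 ⊖ y0) y1). pose proof (anorm_mul _ y0 (y1 ⊖ y0)).
    pose proof (anorm_nonneg _ y1). pose proof (anorm_nonneg _ y0).
    pose proof (anorm_nonneg _ (y1 ⊖ y0)).
    nra.
Qed.

Lemma sq_seq_conv x : anorm x <= 1 -> exists y, conv (sq_seq x) y.
Proof.
  intro Hx. apply (cauchy_dom _ (sq_majorant (anorm x)) 1).
  - intro n. apply sq_seq_diff; auto.
  - intro n. apply sq_majorant_bounds. split; auto. apply anorm_nonneg.
Qed.

Section IterationLimit.
Variables x y : A.
Hypothesis Hx : anorm x <= 1.
Hypothesis Hy : conv (sq_seq x) y.

Lemma sq_lim_fix : y = (1/2) ⋅ (x ⊕ y ⊗ y).
Proof.
  apply (conv_unique (fun n => sq_seq x (S n))).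
  - apply conv_shift; auto.
  - apply conv_smul, conv_add; [apply conv_const|].
    apply (conv_mul _ _ _ _ 1); auto. intro n. apply sq_seq_bounded; auto.
Qed.

Lemma sq_lim_norm : anorm y <= 1.
Proof. apply (conv_norm_le (sq_seq x) y 1); auto. intro n. apply sq_seq_bounded; auto. Qed.

Lemma sq_lim_ind (P : A -> Prop) :
  (forall u l, (forall n, P (u n)) -> conv u l -> P l) -> P a0 ->
  (forall z, P z -> P ((1/2) ⋅ (x ⊕ z ⊗ z))) -> P y.
Proof.
  intros Hcl H0 Hs. apply (Hcl (sq_seq x)); auto.
  intro n; induction n; simpl; auto.
Qed.

Lemma sq_lim_sa : astar x = x -> astar y = y.
Proof.
  intro Hs. apply sq_lim_ind.
  - intros u l Hu Hl. apply (conv_unique u); auto.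
    replace u with (fun n => astar (u n)) by (apply functional_extensionality; auto).
    apply conv_star; auto.
  - apply star0.
  - intros z Hz. rewrite stars, astar_add, astar_mul, Hs, Hz. reflexivity.
Qed.

Lemma sq_lim_comm z : x ⊗ z = z ⊗ x -> y ⊗ z = z ⊗ y.
Proof.
  intro Hz. apply (sq_lim_ind (fun w => w ⊗ z = z ⊗ w)).
  - intros u l Hu Hl. apply (conv_comm u); auto.
  - rewrite mul0l, mul0r; reflexivity.
  - intros w Hw. rewrite amul_smull, amul_smulr, amul_addl, amul_addr, Hz.
    rewrite <- amul_assoc, Hw, !amul_assoc, Hw. reflexivity.
Qed.

Lemma sq_lim_in S : is_CStar_subalgebra A S -> S x -> S y.
Proof.
  intros HS HxS. apply (sq_lim_ind S).
  - intros u l Hu Hl. exact (sub_lim S u l HS Hu Hl).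
  - exact (sub_zero S HS).
  - intros z Hz. apply (sub_smul S); auto. apply (sub_add S); auto. apply (sub_mul S); auto.
Qed.

End IterationLimit.

Lemma sqrt_one_sub x : anorm x <= 1 -> exists g, g ⊗ g = a1 ⊖ x /\ anorm (a1 ⊖ g) <= 1 /\
  (astar x = x -> astar g = g) /\ (forall z, x ⊗ z = z ⊗ x -> g ⊗ z = z ⊗ g) /\
  (forall S, is_CStar_subalgebra A S -> S x -> S g).
Proof.
  intro Hx. destruct (sq_seq_conv x Hx) as [y Hy].
  exists (a1 ⊖ y). split; [|split; [|split; [|split]]].
  - assert (E : y ⊗ y = 2 ⋅ y ⊖ x).
    { pose proof (sq_lim_fix x y Hx Hy) as F. rewrite F at 3. agroup. }
    rewrite mulBl, !mulBr, !amul_1l, !amul_1r, E. agroup.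
  - replace (a1 ⊖ (a1 ⊖ y)) with y by agroup. exact (sq_lim_norm x y Hx Hy).
  - intro Hs. rewrite astar_add, starN, star1, (sq_lim_sa x y Hy); auto.
  - intros z Hz. rewrite mulBl, mulBr, amul_1l, amul_1r, (sq_lim_comm x y Hy); auto.
  - intros S HS HxS. apply (sub_add S); auto. exact (sub_one S HS).
    apply (sub_opp S); auto. apply (sq_lim_in x y Hy); auto.
Qed.

End SquareRoots.

(* A self-adjoint h is called spectrally positive when ‖t − h‖ ≤ t
   for some t > 0 (i.e. its spectrum lies in [0, 2t]); this norm description avoids
   spectral theory. *)
Section PositiveCone.
Context {A : CStarAlgebra}.
Implicit Types g h k p q x : A.

Definition spec_pos h : Prop :=
  astar h = h /\ exists t, 0 < t /\ anorm (t ⋅ a1 ⊖ h) <= t.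

Lemma spec_pos_sqrt h : spec_pos h -> exists g, spec_pos g /\ astar g = g /\ g ⊗ g = h /\
  (forall z, h ⊗ z = z ⊗ h -> g ⊗ z = z ⊗ g) /\
  (forall S, is_CStar_subalgebra A S -> S h -> S g).
Proof.
  intros [Hs [t [Ht Hn]]].
  set (x := (1/t) ⋅ (t ⋅ a1 ⊖ h)).
  assert (Hx : anorm x <= 1).
  { unfold x. rewrite norm_smul, Rabs_right by (apply Rle_ge, Rlt_le, Rdiv_lt_0_compat; lra).
    apply Rmult_le_reg_l with t; auto. rewrite <- Rmult_assoc.
    replace (t * (1/t)) with 1 by (field; lra). lra. }
  destruct (sqrt_one_sub x Hx) as (q & Hqq & Hqn & Hqs & Hqc & HqS).
  assert (Hst : 0 < sqrt t) by (apply sqrt_lt_R0; auto).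
  assert (Hq : astar q = q).
  { apply Hqs. unfold x. rewrite stars, astar_add, starN, stars, star1, Hs. reflexivity. }
  exists (sqrt t ⋅ q). split; [|split; [|split; [|split]]].
  - split; [rewrite stars, Hq; reflexivity|].
    exists (sqrt t). split; auto.
    replace (sqrt t ⋅ a1 ⊖ sqrt t ⋅ q) with (sqrt t ⋅ (a1 ⊖ q)) by agroup.
    rewrite norm_smul, Rabs_right by lra. nra.
  - rewrite stars, Hq. reflexivity.
  - rewrite amul_smull, amul_smulr, smulA, Hqq, sqrt_sqrt by lra. unfold x. agroup.
  - intros z Hz. rewrite amul_smull, amul_smulr. f_equal. apply Hqc.
    unfold x. rewrite amul_smull, amul_smulr, mulBl, mulBr, !amul_smull, !amul_smulr,
      amul_1l, amul_1r, Hz. reflexivity.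
  - intros S HS Hh. apply (sub_smul S); auto. apply HqS; auto.
    unfold x. apply (sub_smul S); auto. apply (sub_add S); auto.
    + apply (sub_smul S); auto. exact (sub_one S HS).
    + apply (sub_opp S); auto.
Qed.

Lemma Ci_cancel (w : A) : asmul Ci w ⊕ asmul (Cconj Ci) w = a0.
Proof.
  rewrite <- asmul_addl. replace (Cadd Ci (Cconj Ci)) with (RtoC 0) by (apply Cx_ext; simpl; ring).
  apply smul0.
Qed.

(* If p, q are commuting self-adjoint elements with p² + q² = c, then ‖p‖² ≤ |c|:
   e = p + i q satisfies e^* e = c and p = (e + e^* ) / 2. *)
Lemma sum_squares_norm p q c : astar p = p -> astar q = q -> p ⊗ q = q ⊗ p ->
  p ⊗ p ⊕ q ⊗ q = c ⋅ a1 -> anorm p * anorm p <= Rabs c.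
Proof.
  intros Hp Hq Hpq Hc.
  set (e := p ⊕ asmul Ci q).
  assert (Hes : astar e = p ⊕ asmul (Cconj Ci) q).
  { unfold e. rewrite astar_add, astar_smul, Hp, Hq. reflexivity. }
  assert (Hee : astar e ⊗ e = c ⋅ a1).
  { rewrite Hes. unfold e. rewrite !amul_addl, !amul_addr, !amul_smull, !amul_smulr,
      asmul_assoc.
    replace (Cmul (Cconj Ci) Ci) with (RtoC 1) by (apply Cx_ext; simpl; ring).
    rewrite smul1, <- Hc, Hpq.
    transitivity (p ⊗ p ⊕ q ⊗ q ⊕ (asmul Ci (q ⊗ p) ⊕ asmul (Cconj Ci) (q ⊗ p))).
    - agroup.
    - rewrite Ci_cancel. agroup. }
  assert (Hp2 : p = (1/2) ⋅ (e ⊕ astar e)).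
  { rewrite Hes. unfold e.
    transitivity ((1/2) ⋅ (2 ⋅ p ⊕ (asmul Ci q ⊕ asmul (Cconj Ci) q))).
    - rewrite Ci_cancel. agroup.
    - agroup. }
  assert (Hn : anorm e * anorm e <= Rabs c).
  { rewrite <- anorm_cstar, Hee. apply norm_scal. }
  assert (Hpn : anorm p <= anorm e).
  { rewrite Hp2, norm_smul, Rabs_right by lra.
    pose proof (anorm_triangle _ e (astar e)). rewrite norm_star in H. lra. }
  pose proof (anorm_nonneg _ p). nra.
Qed.

(* ‖g²‖ ≤ t implies ‖t − g²‖ ≤ t for self-adjoint g: with w = g/√t and q a square root
   of 1 − w², apply [sum_squares_norm] to q, w and note t − g² = t q². *)
Lemma sq_spec_bound g t : astar g = g -> anorm (g ⊗ g) <= t -> 0 < t ->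
  anorm (t ⋅ a1 ⊖ g ⊗ g) <= t.
Proof.
  intros Hg Hn Ht.
  assert (Hst : 0 < sqrt t) by (apply sqrt_lt_R0; auto).
  set (w := (1 / sqrt t) ⋅ g).
  assert (Hws : astar w = w) by (unfold w; rewrite stars, Hg; reflexivity).
  assert (Hww : g ⊗ g = t ⋅ (w ⊗ w)).
  { assert (E : t * (1 / sqrt t * (1 / sqrt t)) = 1).
    { rewrite <- (sqrt_sqrt t) at 1 by lra. field. lra. }
    transitivity ((t * (1 / sqrt t * (1 / sqrt t))) ⋅ (g ⊗ g)).
    - rewrite E, smul1. reflexivity.
    - unfold w. rewrite amul_smull, amul_smulr. agroup. }
  assert (Hwn : anorm (w ⊗ w) <= 1).
  { rewrite Hww, norm_smul, Rabs_right in Hn by lra.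
    apply Rmult_le_reg_l with t; auto. lra. }
  destruct (sqrt_one_sub (w ⊗ w) Hwn) as (q & Hqq & _ & Hqs & Hqc & _).
  assert (Hq : astar q = q) by (apply Hqs; rewrite astar_mul, Hws; reflexivity).
  assert (Hqw : q ⊗ w = w ⊗ q) by (apply Hqc; rewrite amul_assoc; reflexivity).
  assert (HU : anorm q * anorm q <= 1).
  { rewrite <- Rabs_R1. apply (sum_squares_norm q w 1 Hq Hws Hqw). rewrite Hqq. agroup. }
  replace (t ⋅ a1 ⊖ g ⊗ g) with (t ⋅ (q ⊗ q)) by (rewrite Hqq, Hww; agroup).
  rewrite norm_smul, norm_sa_sq, Rabs_right by (auto; lra). nra.
Qed.

Lemma spec_pos_sq g : astar g = g -> spec_pos (g ⊗ g).
Proof.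
  intro Hg. split; [rewrite astar_mul, Hg; reflexivity|].
  exists (anorm (g ⊗ g) + 1). pose proof (anorm_nonneg _ (g ⊗ g)).
  split; [lra|]. apply sq_spec_bound; auto; lra.
Qed.

Lemma spec_pos_add h k : spec_pos h -> spec_pos k -> spec_pos (h ⊕ k).
Proof.
  intros [Hh [s [Hs Hsn]]] [Hk [t [Ht Htn]]].
  split; [rewrite astar_add, Hh, Hk; reflexivity|].
  exists (s + t). split; [lra|].
  replace ((s + t) ⋅ a1 ⊖ (h ⊕ k)) with ((s ⋅ a1 ⊖ h) ⊕ (t ⋅ a1 ⊖ k)) by agroup.
  eapply Rle_trans. apply anorm_triangle. lra.
Qed.

Lemma spec_pos_scale h c : spec_pos h -> 0 < c -> spec_pos (c ⋅ h).
Proof.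
  intros [Hh [t [Ht Htn]]] Hc.
  split; [rewrite stars, Hh; reflexivity|].
  exists (c * t). split; [nra|].
  replace ((c * t) ⋅ a1 ⊖ c ⋅ h) with (c ⋅ (t ⋅ a1 ⊖ h)) by agroup.
  rewrite norm_smul, Rabs_right by lra. nra.
Qed.

Lemma spec_pos_antisym h : spec_pos h -> spec_pos (⊖ h) -> h = a0.
Proof.
  intros Hh Hn.
  destruct (spec_pos_sqrt h Hh) as (g & _ & Hg & Hgg & Hgc & _).
  destruct (spec_pos_sqrt (⊖ h) Hn) as (k & _ & Hk & Hkk & Hkc & _).
  assert (Hkh : k ⊗ h = h ⊗ k).
  { rewrite <- (oppK (k ⊗ h)), <- mulNr, Hkc, mulNl, oppK; reflexivity. }
  assert (Hgk : g ⊗ k = k ⊗ g) by (apply Hgc; symmetry; exact Hkh).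
  pose proof (sum_squares_norm g k 0 Hg Hk Hgk) as HU. rewrite Rabs_R0 in HU.
  assert (Hg0 : anorm g = 0).
  { pose proof (anorm_nonneg _ g).
    assert (anorm g * anorm g <= 0) by (apply HU; rewrite Hgg, Hkk, smul0, aadd_opp; reflexivity).
    nra. }
  rewrite <- Hgg, (anorm_eq0 _ g Hg0), mul0l. reflexivity.
Qed.

End PositiveCone.

Section Invertibility.
Context {A : CStarAlgebra}.
Implicit Types h x y z : A.

Definition invertible x : Prop := exists y, x ⊗ y = a1 /\ y ⊗ x = a1.

Lemma inverse_comm x y z : x ⊗ y = a1 -> y ⊗ x = a1 -> x ⊗ z = z ⊗ x -> y ⊗ z = z ⊗ y.
Proof.
  intros H1 H2 H3.
  transitivity (y ⊗ z ⊗ (x ⊗ y)); [rewrite H1, amul_1r; reflexivity|].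
  rewrite !amul_assoc, <- (amul_assoc _ y z x), <- H3, amul_assoc, H2, amul_1l.
  reflexivity.
Qed.

Lemma invertible_mul x y : invertible x -> invertible y -> invertible (x ⊗ y).
Proof.
  intros [x' [H1 H2]] [y' [H3 H4]]. exists (y' ⊗ x'). split.
  - rewrite amul_assoc, <- (amul_assoc _ x y y'), H3, amul_1r, H1. reflexivity.
  - rewrite amul_assoc, <- (amul_assoc _ y' x' x), H2, amul_1r, H4. reflexivity.
Qed.

Lemma invertible_factor x y : x ⊗ y = y ⊗ x -> invertible (x ⊗ y) -> invertible x.
Proof.
  intros Hc [w [H1 H2]]. exists (y ⊗ w). split.
  - rewrite amul_assoc. exact H1.
  - assert (Hwy : w ⊗ y = y ⊗ w).
    { apply (inverse_comm (x ⊗ y) w y H1 H2). rewrite Hc at 1. symmetry. apply amul_assoc. }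
    rewrite <- Hwy, <- amul_assoc, <- Hc. exact H2.
Qed.

Lemma invertible_scale x c : invertible x -> c <> 0 -> invertible (c ⋅ x).
Proof.
  intros [y [H1 H2]] Hc. exists ((1/c) ⋅ y). split.
  - rewrite amul_smull, amul_smulr, smulA, H1.
    replace (c * (1/c)) with 1 by (field; auto). apply smul1.
  - rewrite amul_smull, amul_smulr, smulA, H2.
    replace (1/c * c) with 1 by (field; auto). apply smul1.
Qed.

Fixpoint neumann_sum z (n : nat) : A :=
  match n with
  | O => a0
  | S k => a1 ⊕ z ⊗ neumann_sum z k
  end.

Lemma neumann_sum_comm z n : z ⊗ neumann_sum z n = neumann_sum z n ⊗ z.
Proof.
  induction n; simpl.
  - rewrite mul0l, mul0r; reflexivity.
  - rewrite amul_addl, amul_addr, amul_1l, amul_1r, <- amul_assoc, IHn, amul_assoc.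
    reflexivity.
Qed.

Lemma neumann_sum_diff z n : anorm (neumann_sum z (S n) ⊖ neumann_sum z n) <= anorm z ^ n.
Proof.
  induction n; simpl.
  - rewrite mul0r, opp0, !aadd_0. apply norm1_le.
  - replace (a1 ⊕ z ⊗ (a1 ⊕ z ⊗ neumann_sum z n) ⊖ (a1 ⊕ z ⊗ neumann_sum z n))
      with (z ⊗ (a1 ⊕ z ⊗ neumann_sum z n ⊖ neumann_sum z n)) by (rewrite mulBr; agroup).
    eapply Rle_trans; [apply anorm_mul|].
    apply Rmult_le_compat_l; auto. apply anorm_nonneg.
Qed.

Lemma neumann z : anorm z < 1 -> invertible (a1 ⊖ z).
Proof.
  intro Hz. pose proof (anorm_nonneg _ z) as Hr0. set (r := anorm z) in *.
  set (geom := fix geom n := match n with O => 0 | S k => geom k + r ^ k end).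
  assert (Hgeom : forall n, geom n = (1 - r ^ n) / (1 - r)).
  { intro n; induction n; simpl; [field; lra | rewrite IHn; field; lra]. }
  destruct (cauchy_dom (neumann_sum z) geom (1 / (1 - r))) as [y Hy].
  - intro n. simpl. replace (geom n + r ^ n - geom n) with (r ^ n) by ring.
    apply neumann_sum_diff.
  - intro n. rewrite Hgeom. apply Rmult_le_compat_r.
    + apply Rlt_le, Rinv_0_lt_compat. lra.
    + pose proof (pow_le r n Hr0). lra.
  - assert (Hfix : y = a1 ⊕ z ⊗ y).
    { apply (conv_unique (fun n => neumann_sum z (S n))); [apply conv_shift; auto|].
      apply conv_add; [apply conv_const|apply conv_mull; auto]. }
    assert (Hc : y ⊗ z = z ⊗ y).
    { apply (conv_comm (neumann_sum z)); auto. intro n. symmetry. apply neumann_sum_comm. }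
    exists y. split.
    + rewrite mulBl, amul_1l. rewrite Hfix at 1. agroup.
    + rewrite mulBr, amul_1r, Hc. rewrite Hfix at 1. agroup.
Qed.

(* h + λ = (t + λ)(1 − (t − h)/(t + λ)) with ‖(t − h)/(t + λ)‖ < 1 *)
Lemma spec_pos_shift_invertible h l : spec_pos h -> 0 < l -> invertible (h ⊕ l ⋅ a1).
Proof.
  intros [Hh [t [Ht Htn]]] Hl.
  set (z := (1 / (t + l)) ⋅ (t ⋅ a1 ⊖ h)).
  assert (Hz : anorm z < 1).
  { unfold z. rewrite norm_smul, Rabs_right by (apply Rle_ge, Rlt_le, Rdiv_lt_0_compat; lra).
    apply Rmult_lt_reg_l with (t + l); [lra|]. rewrite <- Rmult_assoc.
    replace ((t + l) * (1 / (t + l))) with 1 by (field; lra). lra. }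
  replace (h ⊕ l ⋅ a1) with ((t + l) ⋅ (a1 ⊖ z)) by (unfold z; agroup).
  apply invertible_scale; [apply neumann; auto|lra].
Qed.

End Invertibility.

Section Commutation.
Context {A : CStarAlgebra}.
Implicit Types a b c : A.

Lemma comm_1 a : a ⊗ a1 = a1 ⊗ a.
Proof. rewrite amul_1l, amul_1r; reflexivity. Qed.
Lemma comm_add a b c : a ⊗ b = b ⊗ a -> a ⊗ c = c ⊗ a -> a ⊗ (b ⊕ c) = (b ⊕ c) ⊗ a.
Proof. intros H1 H2. rewrite amul_addl, amul_addr, H1, H2; reflexivity. Qed.
Lemma comm_opp a b : a ⊗ b = b ⊗ a -> a ⊗ (⊖ b) = (⊖ b) ⊗ a.
Proof. intros H1. rewrite mulNl, mulNr, H1; reflexivity. Qed.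
Lemma comm_smul a b s : a ⊗ b = b ⊗ a -> a ⊗ (asmul s b) = (asmul s b) ⊗ a.
Proof. intros H1. rewrite amul_smull, amul_smulr, H1; reflexivity. Qed.
Lemma comm_mul a b c : a ⊗ b = b ⊗ a -> a ⊗ c = c ⊗ a -> a ⊗ (b ⊗ c) = (b ⊗ c) ⊗ a.
Proof. intros H1 H2. rewrite amul_assoc, H1, <- amul_assoc, H2, amul_assoc; reflexivity. Qed.

End Commutation.

Ltac comm_solve :=
  first [ reflexivity | assumption | (symmetry; assumption) | apply comm_1
        | apply comm_add; comm_solve | apply comm_opp; comm_solve
        | apply comm_smul; comm_solve | apply comm_mul; comm_solve
        | (symmetry; first [ apply comm_add; comm_solve | apply comm_opp; comm_solve
                           | apply comm_smul; comm_solve | apply comm_mul; comm_solve ]) ].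

(* The route is the
   classical one: the spectral criterion (h ≥ 0 iff h + λ is invertible for all λ > 0),
   Jacobson's lemma (1 − xy invertible iff 1 − yx invertible), the decomposition
   h = h₊ − h₋ through |h| = √(h²), and the fact that −c^* c ≥ 0 forces c = 0. *)
Section FukamiyaKaplansky.
Context {A : CStarAlgebra}.
Implicit Types b c g h k m p q u v w x y z : A.

(* the inverse of a positive element is positive: z = (z √y)² *)
Lemma inverse_spec_pos y z : spec_pos y -> y ⊗ z = a1 -> z ⊗ y = a1 -> spec_pos z.
Proof.
  intros Hy Hyz Hzy.
  destruct (spec_pos_sqrt y Hy) as (y0 & _ & Hy0 & Hy0y0 & _ & _).
  assert (Hzs : astar z = z).
  { transitivity (astar z ⊗ (y ⊗ z)); [rewrite Hyz, amul_1r; reflexivity|].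
    rewrite amul_assoc, <- (proj1 Hy) at 1.
    rewrite <- astar_mul, Hyz, star1, amul_1l. reflexivity. }
  assert (Hzy0 : z ⊗ y0 = y0 ⊗ z).
  { apply (inverse_comm y z y0 Hyz Hzy). rewrite <- Hy0y0. comm_solve. }
  assert (E : (z ⊗ y0) ⊗ (z ⊗ y0) = z).
  { transitivity (z ⊗ z ⊗ (y0 ⊗ y0)).
    - rewrite !amul_assoc, <- (amul_assoc _ z y0 z), <- Hzy0, amul_assoc. reflexivity.
    - rewrite Hy0y0, <- amul_assoc, Hzy, amul_1r. reflexivity. }
  rewrite <- E. apply spec_pos_sq. rewrite astar_mul, Hy0, Hzs. symmetry; exact Hzy0.
Qed.

(* an invertible positive y stays positive after subtracting small multiples of 1:
   y − d = (√(1 − d y⁻¹) √y)², the square root being taken in the bicommutant of y *)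
Lemma invertible_spec_pos_gap y : spec_pos y -> invertible y ->
  exists delta, 0 < delta /\ forall d, 0 < d <= delta -> exists p, astar p = p /\
    p ⊗ p = y ⊖ d ⋅ a1 /\ (forall g, y ⊗ g = g ⊗ y -> p ⊗ g = g ⊗ p).
Proof.
  intros Hy [z [Hyz Hzy]].
  pose proof (inverse_spec_pos y z Hy Hyz Hzy) as [Hzs _].
  destruct (spec_pos_sqrt y Hy) as (y0 & _ & Hy0 & Hy0y0 & Hy0c & _).
  exists (1 / (anorm z + 1)). pose proof (anorm_nonneg _ z).
  split; [apply Rdiv_lt_0_compat; lra|]. intros d Hd.
  set (w := a1 ⊖ d ⋅ z).
  assert (Hw : spec_pos w).
  { split; [unfold w; rewrite astar_add, starN, stars, star1, Hzs; reflexivity|].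
    exists 1. split; [lra|]. replace (1 ⋅ a1 ⊖ w) with (d ⋅ z) by (unfold w; agroup).
    rewrite norm_smul, Rabs_right by lra.
    assert (Hdz : d * (anorm z + 1) <= 1).
    { replace 1 with (1 / (anorm z + 1) * (anorm z + 1)) at 2 by (field; lra).
      apply Rmult_le_compat_r; lra. }
    nra. }
  destruct (spec_pos_sqrt w Hw) as (q & _ & Hq & Hqq & Hqc & _).
  assert (Hzc : forall g, y ⊗ g = g ⊗ y -> z ⊗ g = g ⊗ z).
  { intros g Hg. apply (inverse_comm y z g Hyz Hzy Hg). }
  assert (Hqy0 : q ⊗ y0 = y0 ⊗ q).
  { apply Hqc. unfold w. symmetry. apply comm_add; [apply comm_1|apply comm_opp, comm_smul].
    symmetry. apply Hzc. symmetry. apply Hy0c. reflexivity. }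
  exists (q ⊗ y0). split; [|split].
  - rewrite astar_mul, Hq, Hy0. symmetry; exact Hqy0.
  - transitivity ((q ⊗ q) ⊗ (y0 ⊗ y0)).
    + rewrite !amul_assoc, <- (amul_assoc _ q y0 q), <- Hqy0, amul_assoc. reflexivity.
    + rewrite Hqq, Hy0y0. unfold w. rewrite mulBl, amul_1l, amul_smull, Hzy. reflexivity.
  - intros g Hg. symmetry. apply comm_mul; symmetry.
    + apply Hqc. unfold w. symmetry. apply comm_add; [apply comm_1|apply comm_opp, comm_smul].
      symmetry. apply Hzc; auto.
    + apply Hy0c; auto.
Qed.

(* ‖x‖ lies in the spectrum of a positive x: with g = √x and p² = ‖x‖ − x − d we would
   get g² + p² = ‖x‖ − d, whence ‖x‖ = ‖g‖² ≤ ‖x‖ − d *)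
Lemma norm_in_spectrum x : spec_pos x -> 0 < anorm x -> ~ invertible (anorm x ⋅ a1 ⊖ x).
Proof.
  intros Hx Ht Hinv. set (t := anorm x) in *.
  destruct (spec_pos_sqrt x Hx) as (g & _ & Hg & Hgg & _ & _).
  set (y := t ⋅ a1 ⊖ x).
  assert (Hy : spec_pos y).
  { split; [unfold y; rewrite astar_add, starN, stars, star1, (proj1 Hx); reflexivity|].
    exists t. split; auto. replace (t ⋅ a1 ⊖ y) with x by (unfold y; agroup). unfold t; lra. }
  destruct (invertible_spec_pos_gap y Hy Hinv) as (delta & Hdelta & Hgap).
  destruct (Hgap (Rmin delta (t / 2))) as (p & Hp & Hpp & Hpc).
  { split; [apply Rmin_glb_lt; lra|apply Rmin_l]. }
  set (d := Rmin delta (t / 2)) in *.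
  assert (Hd : 0 < d <= t / 2) by (split; [apply Rmin_glb_lt|apply Rmin_r]; lra).
  assert (Hgp : g ⊗ p = p ⊗ g) by (symmetry; apply Hpc; unfold y; rewrite <- Hgg; comm_solve).
  assert (HU : anorm g * anorm g <= Rabs (t - d)).
  { apply (sum_squares_norm g p); auto. rewrite Hgg, Hpp. unfold y. agroup. }
  rewrite <- norm_sa_sq, Hgg, Rabs_right in HU by (auto; lra). fold t in HU. lra.
Qed.

Lemma jacobson x y l : l <> 0 -> invertible (l ⋅ a1 ⊖ x ⊗ y) -> invertible (l ⋅ a1 ⊖ y ⊗ x).
Proof.
  intros Hl [W [H1 H2]].
  exists ((1/l) ⋅ (a1 ⊕ y ⊗ W ⊗ x)).
  assert (C1 : (l ⋅ a1 ⊖ y ⊗ x) ⊗ (y ⊗ W ⊗ x) = y ⊗ x).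
  { transitivity (y ⊗ ((l ⋅ a1 ⊖ x ⊗ y) ⊗ W) ⊗ x).
    - aexpand. agroup.
    - rewrite H1, amul_1r. reflexivity. }
  assert (C2 : (y ⊗ W ⊗ x) ⊗ (l ⋅ a1 ⊖ y ⊗ x) = y ⊗ x).
  { transitivity (y ⊗ (W ⊗ (l ⋅ a1 ⊖ x ⊗ y)) ⊗ x).
    - aexpand. agroup.
    - rewrite H2, amul_1r. reflexivity. }
  split.
  - rewrite amul_smulr, amul_addr, amul_1r, C1. agroup.
  - rewrite amul_smull, amul_addl, amul_1l, C2. agroup.
Qed.

(* With m = |h| (m ≥ 0, m² = h², m h = h m), the parts h₊ = (m + h)/2 and
   h₋ = (m − h)/2 satisfy h₊ h₋ = h₋ h₊ = 0, and h₊ + λ, h₋ + λ are invertible for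
   λ > 0, as (h₊ + λ)(h₋ + λ) = λ(m + λ). *)
Section AbsoluteValue.
Variables h m : A.
Hypothesis Hm : spec_pos m.
Hypothesis Hmm : m ⊗ m = h ⊗ h.
Hypothesis Hmh : m ⊗ h = h ⊗ m.

Let hp := (1/2) ⋅ (m ⊕ h).
Let hn := (1/2) ⋅ (m ⊖ h).

Lemma pos_part_neg_part : hp ⊗ hn = a0 /\ hn ⊗ hp = a0.
Proof. unfold hp, hn. split; aexpand; rewrite Hmm, Hmh; agroup. Qed.

Lemma parts_shift_invertible l : 0 < l ->
  invertible (hp ⊕ l ⋅ a1) /\ invertible (hn ⊕ l ⋅ a1).
Proof.
  intro Hl. destruct pos_part_neg_part as [Hpn Hnp].
  assert (P1 : (hp ⊕ l ⋅ a1) ⊗ (hn ⊕ l ⋅ a1) = l ⋅ (m ⊕ l ⋅ a1)).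
  { aexpand. rewrite Hpn. unfold hp, hn. agroup. }
  assert (P2 : (hn ⊕ l ⋅ a1) ⊗ (hp ⊕ l ⋅ a1) = l ⋅ (m ⊕ l ⋅ a1)).
  { aexpand. rewrite Hnp. unfold hp, hn. agroup. }
  assert (Pi : invertible (l ⋅ (m ⊕ l ⋅ a1))).
  { apply invertible_scale; [apply spec_pos_shift_invertible; auto|lra]. }
  split.
  - apply (invertible_factor _ (hn ⊕ l ⋅ a1)); [rewrite P1, P2; reflexivity|rewrite P1; auto].
  - apply (invertible_factor _ (hp ⊕ l ⋅ a1)); [rewrite P1, P2; reflexivity|rewrite P2; auto].
Qed.

End AbsoluteValue.

Lemma abs_exists h : astar h = h ->
  exists m, spec_pos m /\ astar m = m /\ m ⊗ m = h ⊗ h /\ m ⊗ h = h ⊗ m.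
Proof.
  intro Hh. destruct (spec_pos_sqrt (h ⊗ h) (spec_pos_sq h Hh)) as (m & Hm & Hms & Hmm & Hmc & _).
  exists m. split; [exact Hm|split; [exact Hms|split; [exact Hmm|]]].
  apply Hmc. symmetry. apply amul_assoc.
Qed.

(* Otherwise s = ‖h₋‖ > 0 and s² − h₋² = (s − h₋)(s + h₋) would be invertible, since
   (s − h₋)(1 + h₊/s) = h + s; this contradicts [norm_in_spectrum] for h₋². *)
Lemma spectral_criterion h : astar h = h ->
  (forall l, 0 < l -> invertible (h ⊕ l ⋅ a1)) -> spec_pos h.
Proof.
  intros Hh Hinv.
  destruct (abs_exists h Hh) as (m & Hm & Hms & Hmm & Hmh).
  destruct (pos_part_neg_part h m Hmm Hmh) as [Hpn Hnp].
  set (u := (1/2) ⋅ (m ⊕ h)) in *. set (v := (1/2) ⋅ (m ⊖ h)) in *.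
  assert (Hvs : astar v = v) by (unfold v; rewrite stars, astar_add, starN, Hms, Hh; reflexivity).
  destruct (Req_dec (anorm v) 0) as [H0|H0].
  - replace h with (m ⊖ 2 ⋅ v) by (unfold v; agroup).
    rewrite (anorm_eq0 _ v H0), smulx0, opp0, aadd_0. exact Hm.
  - set (s := anorm v) in *. assert (Hs : 0 < s) by (pose proof (anorm_nonneg _ v); unfold s in *; lra).
    exfalso. apply (norm_in_spectrum (v ⊗ v)); [apply spec_pos_sq; auto|(rewrite norm_sa_sq by auto); fold s; nra|].
    rewrite norm_sa_sq by auto. fold s.
    replace ((s * s) ⋅ a1 ⊖ v ⊗ v) with ((s ⋅ a1 ⊖ v) ⊗ (s ⋅ a1 ⊕ v)) by (aexpand; agroup).
    apply invertible_mul.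
    + assert (E1 : (s ⋅ a1 ⊖ v) ⊗ (a1 ⊕ (1/s) ⋅ u) = h ⊕ s ⋅ a1).
      { aexpand. rewrite Hnp. unfold u, v. agroup. }
      assert (E2 : (a1 ⊕ (1/s) ⋅ u) ⊗ (s ⋅ a1 ⊖ v) = h ⊕ s ⋅ a1).
      { aexpand. rewrite Hpn. unfold u, v. agroup. }
      apply (invertible_factor _ (a1 ⊕ (1/s) ⋅ u)); [congruence|rewrite E1; auto].
    + rewrite aadd_comm. apply (parts_shift_invertible h m Hm Hmm Hmh s Hs).
Qed.

(* −c^* c ≥ 0 implies −c c^* ≥ 0, by Jacobson's lemma and the spectral criterion *)
Lemma neg_star_square_swap c : spec_pos (⊖ (astar c ⊗ c)) -> spec_pos (⊖ (c ⊗ astar c)).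
Proof.
  intro Hc. apply spectral_criterion.
  - rewrite starN, astar_mul, astar_invol. reflexivity.
  - intros l Hl. rewrite aadd_comm. apply jacobson with (x := astar c); [lra|].
    pose proof (spec_pos_shift_invertible _ l Hc Hl) as H. rewrite aadd_comm in H. exact H.
Qed.

(* c c^* + c^* c = ((c + c^* )² + (i(c^* − c))²)/2 is positive *)
Lemma star_sum_spec_pos c : spec_pos (c ⊗ astar c ⊕ astar c ⊗ c).
Proof.
  set (h := c ⊕ astar c). set (k := asmul (mkC 0 (-1)) (c ⊖ astar c)).
  assert (Hh : astar h = h) by (unfold h; rewrite astar_add, astar_invol; agroup).
  assert (Hk : astar k = k).
  { unfold k. rewrite astar_smul, astar_add, starN, astar_invol.
    replace (Cconj (mkC 0 (-1))) with (Cmul (RtoC (-1)) (mkC 0 (-1)))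
      by (apply Cx_ext; simpl; ring).
    rewrite <- asmul_assoc, smulN1, <- smul_opp. f_equal. agroup. }
  assert (Hkk : k ⊗ k = ⊖ ((c ⊖ astar c) ⊗ (c ⊖ astar c))).
  { unfold k. rewrite amul_smull, amul_smulr, asmul_assoc.
    replace (Cmul (mkC 0 (-1)) (mkC 0 (-1))) with (RtoC (-1)) by (apply Cx_ext; simpl; ring).
    apply smulN1. }
  replace (c ⊗ astar c ⊕ astar c ⊗ c) with ((1/2) ⋅ (h ⊗ h) ⊕ (1/2) ⋅ (k ⊗ k))
    by (rewrite Hkk; unfold h; aexpand; agroup).
  apply spec_pos_add; apply spec_pos_scale; try lra; apply spec_pos_sq; auto.
Qed.

(* −c^* c ≥ 0 forces c = 0: then c c^* ≥ 0 and −c c^* ≥ 0, so c c^* = 0 *)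
Lemma neg_star_square_zero c : spec_pos (⊖ (astar c ⊗ c)) -> c = a0.
Proof.
  intro Hc.
  assert (Hcc : spec_pos (c ⊗ astar c)).
  { replace (c ⊗ astar c) with ((c ⊗ astar c ⊕ astar c ⊗ c) ⊕ ⊖ (astar c ⊗ c)) by agroup.
    apply spec_pos_add; auto. apply star_sum_spec_pos. }
  pose proof (spec_pos_antisym _ Hcc (neg_star_square_swap c Hc)) as H0.
  apply anorm_eq0. pose proof (anorm_cstar _ (astar c)) as H.
  rewrite astar_invol, H0, norm0, norm_star in H. pose proof (anorm_nonneg _ c). nra.
Qed.

(* Fukamiya–Kaplansky.  Write a = b^* b = a₊ − a₋ with a₋ ≥ 0 (spectral criterion) and
   put c = b a₋.  Then c^* c = a₋ a a₋ = −a₋³ = −(√a₋ a₋)², so c = 0, hence a₋³ = 0,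
   a₋ = 0 and a = |a| ≥ 0. *)
Theorem fukamiya_kaplansky b : spec_pos (astar b ⊗ b).
Proof.
  set (a := astar b ⊗ b).
  assert (Ha : astar a = a) by (unfold a; rewrite astar_mul, astar_invol; reflexivity).
  destruct (abs_exists a Ha) as (m & Hm & Hms & Hmm & Hma).
  destruct (pos_part_neg_part a m Hmm Hma) as [_ Hvu].
  set (u := (1/2) ⋅ (m ⊕ a)) in *. set (v := (1/2) ⋅ (m ⊖ a)) in *.
  assert (Hvs : astar v = v) by (unfold v; rewrite stars, astar_add, starN, Hms, Ha; reflexivity).
  assert (Hv : spec_pos v).
  { apply spectral_criterion; auto. intros l Hl.
    apply (parts_shift_invertible a m Hm Hmm Hma l Hl). }
  destruct (spec_pos_sqrt v Hv) as (w & _ & Hw & Hww & Hwc & _).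
  assert (Hwv : w ⊗ v = v ⊗ w) by (apply Hwc; reflexivity).
  set (p := w ⊗ v).
  assert (Hps : astar p = p) by (unfold p; rewrite astar_mul, Hw, Hvs; symmetry; exact Hwv).
  assert (Hpp : p ⊗ p = v ⊗ v ⊗ v).
  { unfold p. rewrite !amul_assoc, <- (amul_assoc _ w v w), <- Hwv, amul_assoc, Hww.
    reflexivity. }
  assert (Hcc : astar (b ⊗ v) ⊗ (b ⊗ v) = ⊖ (p ⊗ p)).
  { rewrite Hpp. transitivity (v ⊗ (u ⊖ v) ⊗ v).
    - replace (u ⊖ v) with a by (unfold u, v; agroup).
      unfold a. rewrite astar_mul, Hvs, !amul_assoc. reflexivity.
    - rewrite mulBr, Hvu. aexpand. agroup. }
  assert (Hc0 : b ⊗ v = a0).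
  { apply neg_star_square_zero. rewrite Hcc, oppK. apply spec_pos_sq; auto. }
  assert (Hp0 : p = a0).
  { apply anorm_eq0. pose proof (norm_sa_sq p Hps) as H.
    rewrite <- (oppK (p ⊗ p)), <- Hcc, Hc0, mul0r, opp0, norm0 in H.
    pose proof (anorm_nonneg _ p). nra. }
  assert (Hv0 : v = a0).
  { apply anorm_eq0. pose proof (norm_sa_sq v Hvs) as H.
    rewrite <- Hww, <- amul_assoc in H at 1. fold p in H. rewrite Hp0, mul0r, norm0 in H.
    pose proof (anorm_nonneg _ v). nra. }
  replace a with (m ⊖ 2 ⋅ v) by (unfold v; agroup).
  rewrite Hv0, smulx0, opp0, aadd_0. exact Hm.
Qed.

End FukamiyaKaplansky.

Section RealImaginaryParts.
Context {A : CStarAlgebra}.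
Implicit Types a p q f : A.

Lemma re_sa a : astar (re_part A a) = re_part A a.
Proof. unfold re_part. rewrite stars, astar_add, astar_invol. agroup. Qed.

Lemma im_sa a : astar (im_part A a) = im_part A a.
Proof.
  unfold im_part. rewrite astar_smul, astar_add, starN, astar_invol.
  replace (Cconj (mkC 0 (- / 2))) with (Cmul (RtoC (-1)) (mkC 0 (- / 2)))
    by (apply Cx_ext; simpl; ring).
  rewrite <- asmul_assoc, smulN1, <- smul_opp. f_equal. agroup.
Qed.

Lemma re_im_dec a : a = re_part A a ⊕ asmul Ci (im_part A a).
Proof.
  unfold re_part, im_part. rewrite asmul_assoc.
  replace (Cmul Ci (mkC 0 (- / 2))) with (RtoC (/ 2)) by (apply Cx_ext; simpl; field).
  agroup.
Qed.

Lemma re_uniq p q : astar p = p -> astar q = q -> re_part A (p ⊕ asmul Ci q) = p.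
Proof.
  intros Hp Hq. unfold re_part. rewrite astar_add, astar_smul, Hp, Hq.
  transitivity ((/ 2) ⋅ (2 ⋅ p ⊕ (asmul Ci q ⊕ asmul (Cconj Ci) q))).
  - f_equal. agroup.
  - rewrite Ci_cancel. agroup.
Qed.

Lemma im_uniq p q : astar p = p -> astar q = q -> im_part A (p ⊕ asmul Ci q) = q.
Proof.
  intros Hp Hq. unfold im_part. rewrite astar_add, astar_smul, Hp, Hq.
  transitivity (asmul (mkC 0 (- / 2)) (asmul Ci q ⊕ (-1) ⋅ asmul (Cconj Ci) q)).
  - f_equal. agroup.
  - rewrite asmul_assoc, <- asmul_addl, asmul_assoc.
    replace (Cmul (mkC 0 (- / 2)) (Cadd Ci (Cmul (RtoC (-1)) (Cconj Ci)))) with (RtoC 1)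
      by (apply Cx_ext; simpl; field).
    apply smul1.
Qed.

Lemma re_of_sa f : astar f = f -> re_part A f = f.
Proof. intro Hf. unfold re_part. rewrite Hf. agroup. Qed.
Lemma im_of_sa f : astar f = f -> im_part A f = a0.
Proof. intro Hf. unfold im_part. rewrite Hf, aadd_opp. apply smulx0. Qed.

Lemma re_add p q : re_part A (p ⊕ q) = re_part A p ⊕ re_part A q.
Proof. unfold re_part. rewrite astar_add. agroup. Qed.
Lemma im_add p q : im_part A (p ⊕ q) = im_part A p ⊕ im_part A q.
Proof. unfold im_part. rewrite <- asmul_addr. f_equal. rewrite astar_add. agroup. Qed.

Lemma re_in S a : is_CStar_subalgebra A S -> S a -> S (re_part A a).
Proof.
  intros HS Ha. unfold re_part.
  apply (sub_smul S), (sub_add S); auto. apply (sub_star S); auto.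
Qed.
Lemma im_in S a : is_CStar_subalgebra A S -> S a -> S (im_part A a).
Proof.
  intros HS Ha. unfold im_part.
  apply (sub_smul S), (sub_add S); auto. apply (sub_opp S), (sub_star S); auto.
Qed.

End RealImaginaryParts.

(* The analytic input of the correspondence: a positive a = b^* b is self-adjoint, C*(a)
   is commutative, and a = g^* g for some g in C*(a) (g = √a, using Fukamiya–Kaplansky). *)
Lemma positive_in_generated {A : CStarAlgebra} (a : A) : Defs.positive A a ->
  astar a = a /\ in_CA A (Cstar_gen A a) /\ positive_in A (Cstar_gen A a) a.
Proof.
  intros [b Hb].
  assert (Ha : astar a = a) by (rewrite Hb, astar_mul, astar_invol; reflexivity).
  split; [exact Ha|split; [apply gen_comm; exact Ha|]].
  assert (Hpos : spec_pos a) by (rewrite Hb; apply fukamiya_kaplansky).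
  destruct (spec_pos_sqrt a Hpos) as (g & _ & Hg & Hgg & _ & HgS).
  exists g. split.
  - apply HgS; [apply gen_sub|apply gen_in].
  - rewrite Hg. symmetry; exact Hgg.
Qed.

Section QuasiStateToIntegral.
Context {A : CStarAlgebra}.
Variable rho : A -> Cx.
Hypothesis Hrho : quasi_state A rho.

(* ρ is real on self-adjoint h: ρ(h) is real because ρ((1 + h)²), ρ(h²), ρ(1) are,
   and ρ is additive on the commutative algebra C*(h) *)
Lemma qs_real h : astar h = h -> Im (rho h) = 0.
Proof.
  destruct Hrho as [[QL1 _] [QP _]]. intro Hh.
  set (C := Cstar_gen A h).
  destruct (QL1 C (gen_comm h Hh)) as [Hadd _].
  assert (HCs : is_CStar_subalgebra A C) by apply gen_sub.
  assert (Ch : C h) by apply gen_in.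
  assert (C1 : C a1) by exact (sub_one C HCs).
  assert (Chh : C (h ⊗ h)) by (apply (sub_mul C); auto).
  assert (E : (a1 ⊕ h) ⊗ (a1 ⊕ h) = (a1 ⊕ h) ⊕ (h ⊕ h ⊗ h)).
  { rewrite amul_addl, !amul_addr, !amul_1l, amul_1r. reflexivity. }
  assert (P1 : Defs.positive A ((a1 ⊕ h) ⊗ (a1 ⊕ h))).
  { exists (a1 ⊕ h). rewrite astar_add, star1, Hh. reflexivity. }
  assert (P2 : Defs.positive A (h ⊗ h)) by (exists h; rewrite Hh; reflexivity).
  assert (P3 : Defs.positive A a1) by (exists a1; rewrite star1, amul_1l; reflexivity).
  destruct (QP _ P1) as [I1 _]. destruct (QP _ P2) as [I2 _]. destruct (QP _ P3) as [I3 _].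
  rewrite E, Hadd in I1 by (try apply (sub_add C); auto).
  rewrite (Hadd a1 h), (Hadd h (h ⊗ h)) in I1 by auto. simpl in I1. lra.
Qed.

Lemma restrict_prob_integral : prob_integral_family A (restrict_qs A rho).
Proof.
  destruct Hrho as [[QL1 _] [QP Q1]]. split.
  - intros C HC. destruct (QL1 C HC) as [Hadd Hsm]. unfold restrict_qs.
    split; [|split; [|split]].
    + intros f g Hf _ Hg _. rewrite Hadd by auto. reflexivity.
    + intros r f Hf _. rewrite Hsm by auto. simpl. ring.
    + intros f _ _ [g [_ Hg]]. apply (QP f). exists g; auto.
    + rewrite Q1. reflexivity.
  - intros C D _ _ _ f _ _. reflexivity.
Qed.

(* ρ is recovered from its restriction, by ρ(Re a + i Im a) = ρ(Re a) + i ρ(Im a) *)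
Lemma extend_restrict a : extend_pif A (restrict_qs A rho) a = rho a.
Proof.
  destruct Hrho as [[_ QL2] _]. unfold extend_pif, restrict_qs.
  rewrite (re_im_dec a) at 3. rewrite QL2 by (apply re_sa || apply im_sa).
  pose proof (qs_real _ (re_sa a)). pose proof (qs_real _ (im_sa a)).
  apply Cx_ext; simpl; lra.
Qed.

Lemma restrict_faithful : faithful_qs A rho <-> faithful_pif A (restrict_qs A rho).
Proof.
  split.
  - intros Hf C HC f Hf1 Hf2 [g [_ Hg]] Hz. apply Hf; [exists g; auto|].
    unfold restrict_qs in Hz. apply Cx_ext; simpl; auto. apply qs_real; auto.
  - intros Hf a Ha Hz. destruct (positive_in_generated a Ha) as (Hs & HC & Hpi).
    apply (Hf _ HC a (gen_in a) Hs Hpi). unfold restrict_qs. rewrite Hz. reflexivity.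
Qed.

End QuasiStateToIntegral.

(* Write J(h) = I_{C*(h)}(h); by naturality
   J(h) = I_C(h) for every commutative C containing h, so on each C the map
   a ↦ J(Re a) + i J(Im a) is the complex-linear extension of I_C. *)
Section IntegralToQuasiState.
Context {A : CStarAlgebra}.
Variable Ifam : (A -> Prop) -> A -> R.
Hypothesis HI : prob_integral_family A Ifam.

Let J (h : A) := Ifam (Cstar_gen A h) h.

Lemma J_eq C h : in_CA A C -> C h -> astar h = h -> J h = Ifam C h.
Proof.
  intros HC Ch Hh. unfold J. destruct HI as [_ Hnat]. symmetry.
  apply (Hnat (Cstar_gen A h) C); auto; [apply gen_comm; auto| |apply gen_in].
  intros x Hx. apply (gen_min h); auto. apply HC.
Qed.

Lemma J_add C x y : in_CA A C -> C x -> C y -> astar x = x -> astar y = y ->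
  J (x ⊕ y) = J x + J y.
Proof.
  intros HC Inx Iny Hx Hy. destruct HI as [Hc _]. destruct (Hc C HC) as (Hadd & _).
  rewrite !(J_eq C); auto.
  - apply (sub_add C); auto. apply HC.
  - rewrite astar_add; congruence.
Qed.

Lemma J_scale C r x : in_CA A C -> C x -> astar x = x -> J (r ⋅ x) = r * J x.
Proof.
  intros HC Inx Hx. destruct HI as [Hc _]. destruct (Hc C HC) as (_ & Hsm & _).
  rewrite !(J_eq C); auto.
  - apply (sub_smul C); auto. apply HC.
  - rewrite stars; congruence.
Qed.

Lemma J0 : J a0 = 0.
Proof.
  rewrite <- (smul0 a0) at 1.
  rewrite (J_scale (Cstar_gen A a0)); [ring|apply gen_comm, star0|apply gen_in|apply star0].
Qed.

Lemma extend_eq a : extend_pif A Ifam a = mkC (J (re_part A a)) (J (im_part A a)).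
Proof. reflexivity. Qed.

Lemma extend_sa C f : in_CA A C -> C f -> astar f = f -> extend_pif A Ifam f = RtoC (Ifam C f).
Proof.
  intros HC Cf Hf. rewrite extend_eq, re_of_sa, im_of_sa, J0, (J_eq C f) by auto.
  reflexivity.
Qed.

Lemma extend_add C x y : in_CA A C -> C x -> C y ->
  extend_pif A Ifam (x ⊕ y) = Cadd (extend_pif A Ifam x) (extend_pif A Ifam y).
Proof.
  intros HC Inx Iny. pose proof (proj1 HC) as HCs.
  rewrite !extend_eq, re_add, im_add.
  rewrite (J_add C (re_part A x)), (J_add C (im_part A x)).
  all: first [reflexivity | exact HC | apply re_sa | apply im_sa | apply re_in; auto | apply im_in; auto].
Qed.

(* s x = (α Re x − β Im x) + i (β Re x + α Im x) for s = α + iβ *)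
Lemma extend_smul C s x : in_CA A C -> C x ->
  extend_pif A Ifam (asmul s x) = Cmul s (extend_pif A Ifam x).
Proof.
  intros HC Inx. pose proof (proj1 HC) as HCs. destruct s as [al be].
  set (p := re_part A x). set (q := im_part A x).
  assert (Hp : astar p = p) by apply re_sa. assert (Hq : astar q = q) by apply im_sa.
  assert (Cp : C p) by (apply re_in; auto). assert (Cq : C q) by (apply im_in; auto).
  assert (Lin : forall r1 r2, astar (r1 ⋅ p ⊕ r2 ⋅ q) = r1 ⋅ p ⊕ r2 ⋅ q /\
                              J (r1 ⋅ p ⊕ r2 ⋅ q) = r1 * J p + r2 * J q).
  { intros r1 r2. split; [rewrite astar_add, !stars, Hp, Hq; reflexivity|].
    rewrite (J_add C), !(J_scale C); auto; try apply (sub_smul C); auto;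
      rewrite stars; congruence. }
  assert (Ex : asmul (mkC al be) x = (al ⋅ p ⊕ (- be) ⋅ q) ⊕ asmul Ci (be ⋅ p ⊕ al ⋅ q)).
  { rewrite (re_im_dec x). fold p q.
    rewrite asmul_addr, asmul_assoc, (asmul_addr _ Ci), !asmul_assoc.
    transitivity ((asmul (RtoC al) p ⊕ asmul (Cmul Ci (RtoC be)) p) ⊕
                  (asmul (RtoC (- be)) q ⊕ asmul (Cmul Ci (RtoC al)) q)).
    - rewrite <- !asmul_addl. f_equal; f_equal; apply Cx_ext; simpl; ring.
    - agroup. }
  destruct (Lin al (- be)) as [S1 J1]. destruct (Lin be al) as [S2 J2].
  rewrite !extend_eq, Ex, re_uniq, im_uniq, J1, J2 by auto. fold p q.
  apply Cx_ext; simpl; ring.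
Qed.

Lemma extend_re_im a b : astar a = a -> astar b = b ->
  extend_pif A Ifam (a ⊕ asmul Ci b) = Cadd (extend_pif A Ifam a) (Cmul Ci (extend_pif A Ifam b)).
Proof.
  intros Ha Hb. rewrite !extend_eq, re_uniq, im_uniq, !re_of_sa, !im_of_sa, J0 by auto.
  apply Cx_ext; simpl; ring.
Qed.

Lemma extend_quasi_state : quasi_state A (extend_pif A Ifam).
Proof.
  destruct HI as [Hc _]. split; [split|split].
  - intros C HC. split.
    + intros x y Inx Iny. apply (extend_add C); auto.
    + intros s x Inx. apply (extend_smul C); auto.
  - apply extend_re_im.
  - intros a Hpa. destruct (positive_in_generated a Hpa) as (Hs & HC & Hpi).
    rewrite (extend_sa _ a HC (gen_in a) Hs). simpl. split; auto.
    destruct (Hc _ HC) as (_ & _ & Hpos & _). apply Hpos; auto. apply gen_in.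
  - assert (HC : in_CA A (Cstar_gen A a1)) by (apply gen_comm; apply star1).
    rewrite (extend_sa _ a1 HC (gen_in a1) star1).
    destruct (Hc _ HC) as (_ & _ & _ & H1). rewrite H1. reflexivity.
Qed.

Lemma extend_faithful : faithful_pif A Ifam <-> faithful_qs A (extend_pif A Ifam).
Proof.
  split.
  - intros Hf a Hpa Hz. destruct (positive_in_generated a Hpa) as (Hs & HC & Hpi).
    rewrite (extend_sa _ a HC (gen_in a) Hs) in Hz.
    apply (Hf _ HC a (gen_in a) Hs Hpi). injection Hz. auto.
  - intros Hf C HC f Cf Hs [g [_ Hg]] Hz. apply Hf; [exists g; auto|].
    rewrite (extend_sa C f HC Cf Hs), Hz. reflexivity.
Qed.

End IntegralToQuasiState.

Theorem theorem6 (A : CStarAlgebra) :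
  (forall rho : A -> Cx, quasi_state A rho ->
     prob_integral_family A (restrict_qs A rho) /\
     (forall a : A, extend_pif A (restrict_qs A rho) a = rho a) /\
     (faithful_qs A rho <-> faithful_pif A (restrict_qs A rho))) /\
  (forall I : (A -> Prop) -> A -> R, prob_integral_family A I ->
     quasi_state A (extend_pif A I) /\
     (forall C, in_CA A C -> forall f : A, C f -> self_adjoint A f ->
        extend_pif A I f = RtoC (I C f)) /\
     (faithful_pif A I <-> faithful_qs A (extend_pif A I))).
Proof.
  split.
  - intros rho Hrho. split; [|split].
    + apply restrict_prob_integral; auto.
    + apply extend_restrict; auto.
    + apply restrict_faithful; auto.
  - intros I HI. split; [|split].
    + apply extend_quasi_state; auto.
    + intros C HC f Cf Hf. apply (extend_sa I HI C f HC Cf Hf).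
    + apply extend_faithful; auto.
Qed.
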